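(* Let $h=\sqrt{\mathsf{min}(\mathsf{min}+4\mathsf{max})}-3\mathsf{min}$. When the characteristic functions range over $V_2$, the AMC-$h$ policy has a competitive ratio of $\frac{\mathsf{min}+\sqrt{\mathsf{min}(\mathsf{min}+4\mathsf{max})}}{2\mathsf{max}}$ for maximizing social welfare with respect to greedy players.
   Context: Players: a finite set $N=\{a_1,\dots,a_n\}$. A characteristic function is $v:2^N\to\mathbb{R}_{\ge 0}$ with $v(\emptyset)=0$. There are fixed, known constants $0<\mathsf{min}\le\mathsf{max}$ and every $v$ considered is monotone and bounded: $\mathsf{min}\le v(S)\le v(T)\le\mathsf{max}$ for all nonempty $S\subseteq T\subseteq N$. $V_2$ denotes the set of such $v$ with $2\mathsf{min}\le\mathsf{max}<3\mathsf{min}$. A coalition structure is a partition $C$ of $N$; its social welfare is $\mathsf{SW}(C\mid v)=\sum_{S\in C}v(S)$. Online process: an arrival order is a permutation $\pi=(\pi_1,\dots,\pi_n)$ of $N$; player $\pi_t$ arrives at time $t$; $\pi_{\prec t}$ is the set of players arriving before time $t$ and $\pi^{-1}(i)$ is the arrival time of $i$. For $S\subseteq N$, $\pi_{|S}$ denotes the players of $S$ in the relative order of $\pi$. Let $C^{t-1}$ be the coalition structure of players arrived before time $t$ ($C^0=\emptyset$). At time $t$, player $\pi_t$ either joins an existing coalition $S\in C^{t-1}$ or forms $\{\pi_t\}$ (choice $S=\emptyset$); decisions are never revised. A distribution policy $\varphi$ assigns to each coalition $S$ (with order $\pi_{|S}$) a split $(\varphi_i(S,\pi_{|S}))_{i\in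 S}$ of $v(S)$. AMC-$h$ policy (threshold $h\ge0$): when player $i$ joins coalition $S$, let $\mathsf{MC}_i=v((\pi_{\prec\pi^{-1}(i)}\cap S)\cup\{i\})-v(\pi_{\prec\pi^{-1}(i)}\cap S)$. If $\mathsf{MC}_i\le h$, all of $\mathsf{MC}_i$ is added to the share of the last player of $S$ who arrived before $i$; if $\mathsf{MC}_i>h$, that previous player additionally receives $h$ and $i$ receives $\mathsf{MC}_i-h$; if $i$ is the first player of her coalition, the ''previous player'' is $i$ herself (so she receives $v(\{i\})$). Shares already assigned are never reduced. Greedy players: $\pi_t$ chooses $S^*\in\arg\max_{S\in C^{t-1}\cup\{\emptyset\}}\varphi_{\pi_t}(S\cup\{\pi_t\},\pi_{|S\cup\{\pi_t\}})$, i.e. her share immediately after joining (predetermined tie-breaking). $C_g(v,\pi\mid\varphi)$ is the final structure. The competitive ratio over a class is $\alpha=\inf_{v,\pi}\mathsf{SW}(C_g(v,\pi\mid\varphi))/\max_C\mathsf{SW}(C\mid v)$, over $v$ in the class and all arrival orders $\pi$. *)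

From HB Require Import structures.
From mathcomp Require Import classical_sets reals.
From mathcomp Require Import all_boot all_order all_algebra perm.
Set Implicit Arguments. Unset Strict Implicit. Unset Printing Implicit Defensive.
Import Order.TTheory GRing.Theory Num.Theory.
Local Open Scope ring_scope.

Section Game.
Variable R : realType.

(* v in V_2 (conditions on v; the conditions 0<min, 2min <= max < 3min on the
   constants are hypotheses of the theorem). *)
Definition inV (mn mx : R) n (v : {set 'I_n} -> R) : Prop :=
  v set0 = 0 /\
  forall S T : {set 'I_n}, S != set0 -> S \subset T ->
    mn <= v S /\ v S <= v T /\ v T <= mx.

Definition hthr (mn mx : R) : R := Num.sqrt (mn * (mn + 4 * mx)) - 3 * mn.

(* A coalition is stored as the sequence of its members in arrival order;
   a (partial) coalition structure is a sequence of coalitions. *)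
Definition members n (s : seq 'I_n) : {set 'I_n} := [set x in s].

(* AMC-h: share of player i immediately after joining the coalition s
   (s = [::] means forming a new singleton coalition). *)
Definition amc_share (h : R) n (v : {set 'I_n} -> R) (s : seq 'I_n) (i : 'I_n) : R :=
  if s is [::] then v [set i]
  else let MC := v (i |: members s) - v (members s) in
       if MC <= h then 0 else MC - h.

(* Options at a step: k < size st means "join coalition number k",
   k = size st means "form a new coalition". *)
Definition option_coal n (st : seq (seq 'I_n)) (k : nat) : seq 'I_n :=
  if (k < size st)%N then nth [::] st k else [::].

Definition best_options (h : R) n (v : {set 'I_n} -> R)
    (st : seq (seq 'I_n)) (i : 'I_n) : seq nat :=
  let cands := iota 0 (size st).+1 in
  let pay k := amc_share h v (option_coal st k) i in
  [seq k <- cands | all (fun k' => pay k' <= pay k) cands].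

(* A predetermined tie-breaking rule: given the current structure, the arriving
   player and the list of maximizing options, it selects one of them (if it
   returns something outside the list, the first maximizing option is used). *)
Definition tiebreak := forall n : nat, seq (seq 'I_n) -> 'I_n -> seq nat -> nat.

Definition greedy_step (h : R) (tb : tiebreak) n (v : {set 'I_n} -> R)
    (st : seq (seq 'I_n)) (i : 'I_n) : seq (seq 'I_n) :=
  let l := best_options h v st i in
  let k := if tb n st i l \in l then tb n st i l else head 0%N l in
  if (k < size st)%N then set_nth [::] st k (rcons (nth [::] st k) i)
  else rcons st [:: i].

Definition greedy_outcome (h : R) (tb : tiebreak) n (v : {set 'I_n} -> R)
    (pi : {perm 'I_n}) : seq (seq 'I_n) :=
  foldl (greedy_step h tb v) [::] [seq pi t | t <- enum 'I_n].

Definition SW_greedy (h : R) (tb : tiebreak) n (v : {set 'I_n} -> R)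
    (pi : {perm 'I_n}) : R :=
  \sum_(s <- greedy_outcome h tb v pi) v (members s).

Definition SW n (v : {set 'I_n} -> R) (C : {set {set 'I_n}}) : R :=
  \sum_(S in C) v S.

Definition OPT n (v : {set 'I_n} -> R) : R :=
  \big[Num.max/0]_(C : {set {set 'I_n}} | partition C [set: 'I_n]) SW v C.

End Game.

(* Under AMC-h with mx < 3 mn a greedy player never joins a coalition of two
   (her share would be below mn <= v{i}), and she joins a singleton {a} only if
   v{a,i} >= v{a} + v{i} + h.  So the greedy structure consists of singletons
   and such h-superadditive pairs, and no two singletons form one.  Charge every
   player the average value of her greedy coalition: the charges add up to the
   greedy welfare, and every coalition T of any partition has
   2 mn v(T) <= (2 mn + h) (charges of T).  The cases |T| = 1 and |T| = 2 are
   balanced exactly by (2 mn + h) (4 mn + h) = 4 mn mx, which is how h is chosen.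
   Conversely, two players with v{a,b} = 2 mn + t, t < h, stay apart, so the
   ratio 2 mn / (2 mn + h) = (mn + sqrt (mn (mn + 4 mx))) / (2 mx) is approached. *)

From mathcomp Require Import all_boot all_order all_algebra perm.
From mathcomp Require Import classical_sets reals.
From mathcomp Require Import lra.
(* [classical_sets] shadows [set0], [setUC], [partition], ... of [finset], which
   are therefore qualified below. *)
Import Order.TTheory GRing.Theory Num.Theory.
Set Implicit Arguments. Unset Strict Implicit. Unset Printing Implicit Defensive.
Local Open Scope ring_scope.

Lemma mem_set_nth (T : eqType) (x0 y x : T) s k :
  (k < size s)%N -> x \in set_nth x0 s k y -> (x == y) || (x \in s).
Proof.
move=> lt_k; rewrite set_nthE lt_k mem_cat inE => /or3P[xs | -> // | xs].
  by rewrite (mem_take xs) orbT.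
by rewrite (mem_drop xs) orbT.
Qed.

Lemma perm_flatten_set_nth_rcons (T : eqType) (ss : seq (seq T)) k x :
  (k < size ss)%N ->
  perm_eq (flatten (set_nth [::] ss k (rcons (nth [::] ss k) x)))
          (rcons (flatten ss) x).
Proof.
move=> lt_k; rewrite set_nthE lt_k.
rewrite -[ss in rcons (flatten ss) x](cat_take_drop k ss) (drop_nth [::] lt_k).
rewrite !flatten_cat /= rcons_cat perm_cat2l cat_rcons rcons_cat perm_cat2l.
by rewrite perm_sym perm_rcons.
Qed.

Lemma members1 n (a : 'I_n) : members [:: a] = [set a].
Proof. by apply/setP => x; rewrite !inE. Qed.

Lemma members2 n (a b : 'I_n) : members [:: a; b] = [set a; b].
Proof. by apply/setP => x; rewrite !inE. Qed.

Section GreedyChoice.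
Variables (R : realType) (h : R) (tb : tiebreak) (n : nat) (v : {set 'I_n} -> R).

Local Notation pay st i k := (amc_share h v (option_coal st k) i).

Lemma best_optionsP st i k : k \in best_options h v st i ->
  (k <= size st)%N /\ forall k', (k' <= size st)%N -> pay st i k' <= pay st i k.
Proof.
rewrite mem_filter mem_iota ltnS => /andP[/allP k_max k_le]; split=> // k' k'_le.
by apply: k_max; rewrite mem_iota ltnS.
Qed.

Lemma best_options_neq0 st i : best_options h v st i != [::].
Proof.
have [k _ k_max] := @arg_maxP _ R 'I_(size st).+1 ord0 xpredT
  (fun k : 'I_(size st).+1 => pay st i k) isT.
rewrite -has_filter; apply/hasP; exists (val k); first by rewrite mem_iota ltn_ord.
apply/allP => k'; rewrite mem_iota add0n => /andP[_ lt_k'].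
exact: (k_max (Ordinal lt_k')).
Qed.

Variant greedy_step_spec st i : seq (seq 'I_n) -> Prop :=
| GreedyJoin k of (k < size st)%N &
    (forall k', (k' <= size st)%N -> pay st i k' <= pay st i k) :
    greedy_step_spec st i (set_nth [::] st k (rcons (nth [::] st k) i))
| GreedyAlone of (forall k', (k' <= size st)%N -> pay st i k' <= v [set i]) :
    greedy_step_spec st i (rcons st [:: i]).

Lemma greedy_stepP st i : greedy_step_spec st i (greedy_step h tb v st i).
Proof.
rewrite /greedy_step; set l := best_options h v st i.
set k := if _ \in l then _ else _.
have /best_optionsP[le_k k_max] : k \in l.
  rewrite /k; case: ifP => // _.
  by rewrite -nth0 mem_nth // lt0n size_eq0 best_options_neq0.
case: ltnP => [lt_k | ge_k]; first exact: GreedyJoin.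
have k_eq : k = size st by apply/eqP; rewrite eqn_leq le_k.
by apply: GreedyAlone => k' /k_max; rewrite k_eq /option_coal ltnn.
Qed.

Lemma greedy_step_nil i : greedy_step h tb v [::] i = [:: [:: i]].
Proof. by case: greedy_stepP. Qed.

Lemma greedy_step_apart a i : amc_share h v [:: a] i < v [set i] ->
  greedy_step h tb v [:: [:: a]] i = [:: [:: a]; [:: i]].
Proof.
move=> lt_join; case: greedy_stepP => // -[|//] _ /(_ 1%N isT).
by rewrite /option_coal /= leNgt lt_join.
Qed.

Lemma perm_flatten_greedy_step st i :
  perm_eq (flatten (greedy_step h tb v st i)) (rcons (flatten st) i).
Proof.
case: greedy_stepP => [k lt_k _ | _]; first exact: perm_flatten_set_nth_rcons.
by rewrite flatten_rcons cats1.
Qed.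

Lemma perm_flatten_foldl_greedy_step st s :
  perm_eq (flatten (foldl (greedy_step h tb v) st s)) (flatten st ++ s).
Proof.
elim: s st => [|i s IHs] st /=; first by rewrite cats0.
apply: perm_trans (IHs _) _; rewrite -cat_rcons perm_cat2r.
exact: perm_flatten_greedy_step.
Qed.

Lemma mem_greedy_outcome pi i : i \in flatten (greedy_outcome h tb v pi).
Proof.
rewrite (perm_mem (perm_flatten_foldl_greedy_step _ _)) /=.
by apply/mapP; exists (perm_inv pi i); rewrite ?mem_enum ?permKV.
Qed.

End GreedyChoice.

Definition avg_value (R : realType) n (v : {set 'I_n} -> R) (s : seq 'I_n) : R :=
  v (members s) / #|members s|%:R.

Definition charge (R : realType) n (v : {set 'I_n} -> R) (G : seq (seq 'I_n))
    (i : 'I_n) : R :=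
  \sum_(s <- G | i \in s) avg_value v s.

Section Charges.
Variables (R : realType) (n : nat) (v : {set 'I_n} -> R).

Lemma avg_value1 (a : 'I_n) : avg_value v [:: a] = v [set a].
Proof. by rewrite /avg_value members1 cards1 divr1. Qed.

Lemma avg_value2 (a b : 'I_n) : a != b -> avg_value v [:: a; b] = v [set a; b] / 2.
Proof. by move=> ab; rewrite /avg_value members2 cards2 ab. Qed.

Lemma sum_charge (G : seq (seq 'I_n)) : v finset.set0 = 0 ->
  \sum_i charge v G i = \sum_(s <- G) v (members s).
Proof.
move=> v0; rewrite /charge; under eq_bigr do rewrite big_mkcond /=.
rewrite exchange_big /=; apply: eq_bigr => s _; rewrite -big_mkcond /=.
rewrite (eq_bigl (fun i => i \in members s)); last by move=> i; rewrite inE.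
rewrite sumr_const /avg_value; have [/cards0_eq-> | s_gt0] := posnP #|members s|.
  by rewrite v0 mul0r mul0rn.
by rewrite -(mulr_natr (v _ / _)) divfK // pnatr_eq0 -lt0n.
Qed.

Lemma avg_value_le_charge (G : seq (seq 'I_n)) s (i : 'I_n) :
  (forall S, 0 <= v S) -> s \in G -> i \in s -> avg_value v s <= charge v G i.
Proof.
move=> v_ge0 sG i_s; rewrite /charge (big_rem s sG) i_s lerDl.
by apply: sumr_ge0 => s' _; rewrite divr_ge0.
Qed.

End Charges.

Definition h_superadditive (R : realType) (h : R) n (v : {set 'I_n} -> R)
    (a b : 'I_n) :=
  v [set a] + v [set b] + h <= v [set a; b].

Definition amc_coalition (R : realType) (h : R) n (v : {set 'I_n} -> R)
    (s : seq 'I_n) :=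
  (exists a, s = [:: a]) \/
  exists a b, [/\ s = [:: a; b], a != b & h_superadditive h v a b].

Definition amc_structure (R : realType) (h : R) n (v : {set 'I_n} -> R)
    (st : seq (seq 'I_n)) :=
  (forall s, s \in st -> amc_coalition h v s) /\
  forall a b, [:: a] \in st -> [:: b] \in st -> a != b ->
    v [set a; b] <= v [set a] + v [set b] + h.

Section AMCStructure.
Variables (R : realType) (mn mx h : R) (n : nat) (v : {set 'I_n} -> R).
Hypotheses (vV : inV mn mx v) (mn_gt0 : 0 < mn) (h_ge0 : 0 <= h).

(* [lra] and [nra] do not see section hypotheses: they are pushed explicitly. *)

Lemma inV_lb (S : {set 'I_n}) : S != finset.set0 -> mn <= v S.
Proof. by move=> S0; have [] := vV.2 S S S0 (subxx S). Qed.

Lemma inV_ub (S : {set 'I_n}) : S != finset.set0 -> v S <= mx.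
Proof. by move=> S0; have [_ []] := vV.2 S S S0 (subxx S). Qed.

Lemma inV_ge0 (S : {set 'I_n}) : 0 <= v S.
Proof.
have [-> | S0] := eqVneq S finset.set0; first by rewrite vV.1.
exact: le_trans (ltW mn_gt0) (inV_lb S0).
Qed.

Lemma inV_lb1 (i : 'I_n) : mn <= v [set i].
Proof. by apply: inV_lb; apply/set0Pn; exists i; rewrite inE. Qed.

Lemma amc_share1 (a i : 'I_n) : amc_share h v [:: a] i =
  let MC := v [set a; i] - v [set a] in if MC <= h then 0 else MC - h.
Proof. by rewrite /amc_share members1 finset.setUC. Qed.

Lemma h_superadditive_neq (a i : 'I_n) : h_superadditive h v a i -> a != i.
Proof.
apply: contraTneq => ->; rewrite /h_superadditive finset.setUid -ltNge.
by have := inV_lb1 i; have := mn_gt0; have := h_ge0; lra.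
Qed.

Lemma amc_share1_ge (a i : 'I_n) :
  v [set i] <= amc_share h v [:: a] i -> h_superadditive h v a i.
Proof.
rewrite amc_share1 /h_superadditive /=.
by case: (lerP _ h); have := inV_lb1 i; have := mn_gt0; lra.
Qed.

Lemma amc_share1_le (a i : 'I_n) : amc_share h v [:: a] i <= v [set i] ->
  v [set a; i] <= v [set a] + v [set i] + h.
Proof.
rewrite amc_share1 /=.
by case: (lerP _ h); have := inV_lb1 i; have := mn_gt0; lra.
Qed.

Hypothesis mx_lt : mx < 3 * mn.

(* Joining a superadditive pair earns at most mx - 2 mn - 2 h < mn. *)
Lemma amc_share_pair_lt (a b i : 'I_n) :
  h_superadditive h v a b -> amc_share h v [:: a; b] i < v [set i].
Proof.
rewrite /h_superadditive /amc_share members2 /= => sup_ab.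
have abi0 : i |: [set a; b] != finset.set0.
  by apply/set0Pn; exists i; rewrite !inE eqxx.
have := inV_ub abi0; have := inV_lb1 i; have := inV_lb1 a; have := inV_lb1 b.
have := mn_gt0; have := h_ge0; have := mx_lt; move=> *.
by case: (lerP _ h); lra.
Qed.

Lemma amc_structure_join (st : seq (seq 'I_n)) k (i : 'I_n) :
  amc_structure h v st -> (k < size st)%N ->
  v [set i] <= amc_share h v (nth [::] st k) i ->
  amc_structure h v (set_nth [::] st k (rcons (nth [::] st k) i)).
Proof.
move=> [st_coal st_apart] lt_k join_ge.
have /st_coal[[a kth] | [a [b [kth _ sup_ab]]]] := mem_nth [::] lt_k; last first.
  by move: join_ge; rewrite kth leNgt amc_share_pair_lt.
rewrite kth /= in join_ge *; have sup_ai := amc_share1_ge join_ge.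
split=> [s /(mem_set_nth lt_k)/orP[/eqP-> | /st_coal//] | c d].
  by right; exists a, i; split=> //; apply: h_superadditive_neq.
move=> /(mem_set_nth lt_k)/orP[/eqP[] // | c_st].
move=> /(mem_set_nth lt_k)/orP[/eqP[] // | d_st].
exact: st_apart.
Qed.

Lemma amc_structure_alone (st : seq (seq 'I_n)) (i : 'I_n) :
  amc_structure h v st ->
  (forall a, [:: a] \in st -> amc_share h v [:: a] i <= v [set i]) ->
  amc_structure h v (rcons st [:: i]).
Proof.
move=> [st_coal st_apart] alone; split=> [s | c d]; rewrite !mem_rcons !inE.
  by case/orP=> [/eqP-> | /st_coal//]; left; exists i.
have apart_i a : [:: a] \in st -> v [set a; i] <= v [set a] + v [set i] + h.
  by move=> /alone; apply: amc_share1_le.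
case/orP=> [/eqP[->] | c_st]; case/orP=> [/eqP[->] | d_st]; rewrite ?eqxx // => cd.
- by rewrite finset.setUC (addrC (v [set i])); apply: apart_i.
- exact: apart_i.
- exact: st_apart.
Qed.

Lemma amc_structure_greedy_step tb (st : seq (seq 'I_n)) (i : 'I_n) :
  amc_structure h v st -> amc_structure h v (greedy_step h tb v st i).
Proof.
move=> st_amc; case: greedy_stepP => [k lt_k k_max | alone].
  apply: amc_structure_join => //.
  by have := k_max _ (leqnn _); rewrite /option_coal ltnn lt_k.
apply: amc_structure_alone => // a a_st.
have := alone (index [:: a] st); rewrite /option_coal index_mem a_st nth_index //.
by apply; rewrite ltnW // index_mem.
Qed.

Lemma amc_structure_greedy_outcome tb (pi : {perm 'I_n}) :
  amc_structure h v (greedy_outcome h tb v pi).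
Proof.
rewrite /greedy_outcome; have : amc_structure h v [::] by [].
elim: [seq _ | _ <- _] [::] => [// | i s IHs] st st_amc /=.
exact/IHs/amc_structure_greedy_step.
Qed.

Variable G : seq (seq 'I_n).
Hypotheses (G_amc : amc_structure h v G) (G_cover : forall i, i \in flatten G).

Lemma charge_cases (i : 'I_n) :
  ([:: i] \in G /\ v [set i] <= charge v G i) \/
  exists V, [/\ V <= 2 * charge v G i, 2 * mn + h <= V, V <= mx
              & v [set i] + mn + h <= V].
Proof.
have /flattenP[s sG i_s] := G_cover i.
have le_charge := avg_value_le_charge inV_ge0 sG i_s.
have [[a s_eq] | [a [b [s_eq ab sup_ab]]]] := G_amc.1 s sG; subst s.
  by move: i_s sG le_charge; rewrite inE => /eqP <-; rewrite avg_value1; left.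
right; exists (v [set a; b]); rewrite avg_value2 // in le_charge.
have ab0 : [set a; b] != finset.set0 by apply/set0Pn; exists a; rewrite !inE eqxx.
move: sup_ab; rewrite /h_superadditive; have := inV_lb1 a; have := inV_lb1 b.
have := inV_ub ab0; move=> *.
by split; [lra | lra | lra | move: i_s; rewrite !inE => /orP[] /eqP->; lra].
Qed.

Lemma mn_le_charge (i : 'I_n) : mn <= charge v G i.
Proof.
have := inV_lb1 i; have := h_ge0.
by case: (charge_cases i) => [[_ ?] | [V [? ? ? ?]]]; lra.
Qed.

Hypothesis h_balance : (2 * mn + h) * (4 * mn + h) = 4 * mn * mx.

Lemma value1_le_charge (i : 'I_n) :
  2 * mn * v [set i] <= (2 * mn + h) * charge v G i.
Proof.
have := inV_ge0 [set i]; have := mn_gt0; have := h_ge0; have := h_balance.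
case: (charge_cases i) => [[_ ?] | [V [? ? ? ?]]] *; nra.
Qed.

Lemma value2_le_charge (x y : 'I_n) : x != y ->
  2 * mn * v [set x; y] <= (2 * mn + h) * (charge v G x + charge v G y).
Proof.
move=> xy; have xy0 : [set x; y] != finset.set0.
  by apply/set0Pn; exists x; rewrite !inE eqxx.
have := inV_ub xy0; have := mn_le_charge x; have := mn_le_charge y.
have := mn_gt0; have := h_ge0; have := h_balance; move=> *.
case: (charge_cases x) => [[x_G vx] | [V [? ? ? ?]]]; last by nra.
case: (charge_cases y) => [[y_G vy] | [V [? ? ? ?]]]; last by nra.
by have := G_amc.2 x y x_G y_G xy; nra.
Qed.

Lemma value_le_charge (T : {set 'I_n}) : T != finset.set0 ->
  2 * mn * v T <= (2 * mn + h) * \sum_(i in T) charge v G i.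
Proof.
move=> T0; have [T_gt2 | ] := ltnP 2 #|T|.
  have sum_ge : 3 * mn <= \sum_(i in T) charge v G i.
    apply: le_trans (_ : mn *+ #|T| <= _); last first.
      by rewrite -sumr_const; apply: ler_sum => i _; apply: mn_le_charge.
    by rewrite -[mn *+ _]mulr_natl ler_wpM2r ?(ltW mn_gt0) // ler_nat.
  by have := inV_ub T0; have := mn_gt0; have := h_ge0; have := mx_lt; nra.
rewrite leq_eqVlt ltnS leq_eqVlt ltnS leqn0 cards_eq0 (negbTE T0) orbF.
case/orP=> [/cards2P[x [y [xy ->]]] | /cards1P[x ->]].
  by rewrite big_setU1 ?inE //= big_set1; apply: value2_le_charge.
by rewrite big_set1; apply: value1_le_charge.
Qed.

Lemma SW_le_charge (P : {set {set 'I_n}}) : finset.partition P [set: 'I_n] ->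
  2 * mn * SW v P <= (2 * mn + h) * \sum_i charge v G i.
Proof.
move=> P_part.
have -> : \sum_i charge v G i = \sum_(i in [set: 'I_n]) charge v G i.
  by apply: eq_bigl => i; rewrite inE.
rewrite /SW (set_partition_big _ P_part) !mulr_sumr.
by apply: ler_sum => T T_P; apply/value_le_charge/(partition_neq0 P_part).
Qed.

End AMCStructure.

Lemma partition_setT (T : finType) :
  [set: T] != finset.set0 -> finset.partition [set [set: T]] [set: T].
Proof.
move=> T0; rewrite /finset.partition cover1 finset.trivIset1 eqxx.
by rewrite finset.in_set1 eq_sym T0.
Qed.

Lemma OPT_ge_setT (R : realType) n (v : {set 'I_n} -> R) :
  (0 < n)%N -> v [set: 'I_n] <= OPT v.
Proof.
move=> n_gt0.
have -> : v [set: 'I_n] = SW v [set [set: 'I_n]] by rewrite /SW big_set1.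
apply: le_bigmax_cond; apply: partition_setT.
by apply/set0Pn; exists (Ordinal n_gt0).
Qed.

Lemma OPT_le (R : realType) n (v : {set 'I_n} -> R) (b : R) : 0 <= b ->
  (forall P, finset.partition P [set: 'I_n] -> SW v P <= b) -> OPT v <= b.
Proof. exact: bigmax_le. Qed.

Lemma OPT_gt0 (R : realType) (mn mx : R) n (v : {set 'I_n} -> R) :
  0 < mn -> (0 < n)%N -> inV mn mx v -> 0 < OPT v.
Proof.
move=> mn_gt0 n_gt0 vV.
apply: lt_le_trans mn_gt0 (le_trans _ (OPT_ge_setT v n_gt0)).
by apply: (inV_lb vV); apply/set0Pn; exists (Ordinal n_gt0).
Qed.

Section Threshold.
Variables (R : realType) (mn mx : R).
Hypotheses (mn_ge0 : 0 <= mn) (mx_ge0 : 0 <= mx).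

Let sqrt_sqr : Num.sqrt (mn * (mn + 4 * mx)) ^+ 2 = mn * (mn + 4 * mx).
Proof. by rewrite sqr_sqrtr // mulr_ge0 // addr_ge0 // mulr_ge0. Qed.

Lemma hthr_balance :
  (2 * mn + hthr mn mx) * (4 * mn + hthr mn mx) = 4 * mn * mx.
Proof. by move: sqrt_sqr; rewrite /hthr expr2; nra. Qed.

Lemma hthr_ge0 : 2 * mn <= mx -> 0 <= hthr mn mx.
Proof.
move=> mx_ge; rewrite /hthr subr_ge0.
have := sqrtr_ge0 (mn * (mn + 4 * mx)); move: sqrt_sqr; rewrite expr2.
by case: (lerP (3 * mn)) => // *; nra.
Qed.

Lemma hthr_ratio : 0 < mn -> 2 * mn <= mx ->
  (mn + Num.sqrt (mn * (mn + 4 * mx))) / (2 * mx) = 2 * mn / (2 * mn + hthr mn mx).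
Proof.
move=> mn_gt0 mx_ge; have := hthr_ge0 mx_ge; have := hthr_balance.
have -> : Num.sqrt (mn * (mn + 4 * mx)) = hthr mn mx + 3 * mn.
  by rewrite /hthr subrK.
move=> balance h_ge0; have mx_gt0 : 0 < 2 * mx by lra.
have c_gt0 : 0 < 2 * mn + hthr mn mx by lra.
by apply/eqP; rewrite eqr_div ?(gt_eqF mx_gt0) ?(gt_eqF c_gt0) //; apply/eqP; nra.
Qed.

End Threshold.

Lemma greedy_ratio_ge (R : realType) (mn mx : R) tb n (v : {set 'I_n} -> R) pi :
  0 < mn -> 2 * mn <= mx -> mx < 3 * mn -> (0 < n)%N -> inV mn mx v ->
  2 * mn / (2 * mn + hthr mn mx) <= SW_greedy (hthr mn mx) tb v pi / OPT v.
Proof.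
move=> mn_gt0 mx_ge mx_lt n_gt0 vV.
have mx_ge0 : 0 <= mx by lra.
have h_ge0 := hthr_ge0 (ltW mn_gt0) mx_ge0 mx_ge.
have balance := hthr_balance (ltW mn_gt0) mx_ge0.
set h := hthr mn mx in h_ge0 balance *.
set G := greedy_outcome h tb v pi.
have G_amc : amc_structure h v G :=
  amc_structure_greedy_outcome vV mn_gt0 h_ge0 mx_lt tb pi.
have G_cover := mem_greedy_outcome h tb v pi.
have charge_ge := mn_le_charge vV mn_gt0 h_ge0 G_amc G_cover.
have SW_le := SW_le_charge vV mn_gt0 h_ge0 mx_lt G_amc G_cover balance.
have -> : SW_greedy h tb v pi = \sum_i charge v G i by rewrite sum_charge ?vV.1.
set X := \sum_i charge v G i in SW_le *.
have X_ge0 : 0 <= X.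
  by apply: sumr_ge0 => i _; apply: le_trans (ltW mn_gt0) (charge_ge i).
have two_mn_gt0 : 0 < 2 * mn by lra.
have c_gt0 : 0 < 2 * mn + h by lra.
have OPT_le_X : OPT v * (2 * mn) <= (2 * mn + h) * X.
  rewrite -ler_pdivlMr //; apply: OPT_le => [|P /SW_le].
    by apply: divr_ge0; [apply: mulr_ge0 | ]; lra.
  by rewrite ler_pdivlMr // mulrC.
have OPT_pos := OPT_gt0 mn_gt0 n_gt0 vV.
rewrite ler_pdivlMr // mulrAC ler_pdivrMr // mulrC.
by apply: le_trans OPT_le_X _; rewrite mulrC.
Qed.

Lemma single_player_ratio_le1 (R : realType) (h : R) tb (v : {set 'I_1} -> R) pi :
  0 < OPT v -> SW_greedy h tb v pi / OPT v <= 1.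
Proof.
move=> OPT_pos; rewrite ler_pdivrMr // mul1r.
rewrite /SW_greedy /greedy_outcome enum_ordSl enum_ord0 /= greedy_step_nil.
rewrite big_seq1 members1.
have -> : [set pi ord0] = [set: 'I_1] by apply/setP => i; rewrite !inE !ord1.
exact: OPT_ge_setT.
Qed.

Definition two_level_game (R : realType) (mn t : R) n : {set 'I_n} -> R :=
  fun S => if #|S| == 0%N then 0 else if #|S| == 1%N then mn else 2 * mn + t.
Arguments two_level_game {R} mn t n.

Lemma two_level_game_inV (R : realType) (mn mx t : R) n :
  0 <= mn -> 0 <= t -> 2 * mn + t <= mx -> inV mn mx (two_level_game mn t n).
Proof.
move=> mn_ge0 t_ge0 le_mx; split=> [|S T]; first by rewrite /two_level_game cards0.
rewrite -card_gt0 => S_gt0 /subset_leq_card; rewrite /two_level_game.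
by case: #|S| S_gt0 => [|[|s]] // _; case: #|T| => [|[|t']] //= _; split; lra.
Qed.

Lemma two_player_ratio_le (R : realType) (h mn t : R) tb pi :
  0 < mn -> 0 <= t -> t < h ->
  SW_greedy h tb (two_level_game mn t 2) pi / OPT (two_level_game mn t 2)
    <= 2 * mn / (2 * mn + t).
Proof.
move=> mn_gt0 t_ge0 t_lt.
set v := two_level_game mn t 2.
have OPT_ge : 2 * mn + t <= OPT v.
  by have := OPT_ge_setT v isT; rewrite /v /two_level_game cardsT card_ord.
have y_x : pi ord_max != pi ord0 by rewrite (inj_eq perm_inj).
have apart : amc_share h v [:: pi ord0] (pi ord_max) < v [set pi ord_max].
  rewrite /amc_share members1 /v /two_level_game cards2 y_x !cards1 /=.
  by case: (lerP _ h); lra.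
have OPT_pos : 0 < OPT v by apply: lt_le_trans OPT_ge; lra.
rewrite /SW_greedy /greedy_outcome enum_ordSl enum_ordSl enum_ord0 /=.
rewrite (_ : lift ord0 ord0 = ord_max); last exact: val_inj.
rewrite greedy_step_nil greedy_step_apart // big_cons big_seq1 !members1.
rewrite /v /two_level_game !cards1 /= -/v ler_pdivrMr // mulrAC.
rewrite ler_pdivlMr; last lra.
by have := ler_wpM2l (_ : 0 <= 2 * mn) OPT_ge; lra.
Qed.

Lemma mulr_le_of_forall_lt (R : realFieldType) (x c h : R) :
  0 <= x -> 0 <= c -> (forall t, 0 <= t < h -> x * t <= c) -> x * h <= c.
Proof.
move=> x_ge0 c_ge0 le_c; rewrite leNgt; apply/negP => lt_c.
have x_gt0 : 0 < x.
  by rewrite lt0r x_ge0 andbT; apply: contraTneq lt_c => ->; rewrite mul0r -leNgt.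
have lt_h : c / x < h by rewrite ltr_pdivrMr // mulrC.
have [lt_mid mid_lt] := midf_lt lt_h.
set t := (c / x + h) / 2 in lt_mid mid_lt.
have t_ge0 : 0 <= t := le_trans (divr_ge0 c_ge0 x_ge0) (ltW lt_mid).
by move: lt_mid; rewrite ltr_pdivrMr // mulrC ltNge le_c // t_ge0 mid_lt.
Qed.

Lemma le_div_of_forall_lt (R : realFieldType) (a h y : R) :
  0 < a -> 0 <= h -> 0 <= y <= 1 ->
  (forall t, 0 <= t < h -> y <= a / (a + t)) -> y <= a / (a + h).
Proof.
move=> a_gt0 h_ge0 /andP[y_ge0 y_le1] y_le; rewrite ler_pdivlMr; last lra.
suff : y * h <= a * (1 - y) by lra.
apply: mulr_le_of_forall_lt => // [|t t_range]; first by apply: mulr_ge0; lra.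
have /andP[t_ge0 _] := t_range.
by have := y_le t t_range; rewrite ler_pdivlMr; lra.
Qed.

Theorem theorem5 (R : realType) (mn mx : R) (tb : tiebreak) :
  0 < mn -> 2 * mn <= mx -> mx < 3 * mn ->
  inf [set r : R | exists (n : nat) (v : {set 'I_n} -> R) (pi : {perm 'I_n}),
         (0 < n)%N /\ inV mn mx v /\
         r = SW_greedy (hthr mn mx) tb v pi / OPT v]
  = (mn + Num.sqrt (mn * (mn + 4 * mx))) / (2 * mx).
Proof.
move=> mn_gt0 mx_ge mx_lt; have mx_ge0 : 0 <= mx by lra.
have h_ge0 := hthr_ge0 (ltW mn_gt0) mx_ge0 mx_ge.
have h_le : 2 * mn + hthr mn mx <= mx.
  by have := hthr_balance (ltW mn_gt0) mx_ge0; nra.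
rewrite hthr_ratio ?(ltW mn_gt0) //; set h := hthr mn mx in h_ge0 h_le *.
set E := (X in inf X = _).
have E_lb : lbound E (2 * mn / (2 * mn + h)).
  by move=> _ [n [v [pi [n_gt0 [vV ->]]]]]; apply: greedy_ratio_ge.
have inf_le r : E r -> inf E <= r by apply: ge_inf; exists (2 * mn / (2 * mn + h)).
have game_inV t n : 0 <= t <= h -> inV mn mx (two_level_game mn t n).
  by case/andP=> t_ge0 t_le; apply: two_level_game_inV; lra.
have E_game t n (pi : {perm 'I_n}) : 0 <= t <= h -> (0 < n)%N ->
    E (SW_greedy h tb (two_level_game mn t n) pi / OPT (two_level_game mn t n)).
  move=> t_range n_gt0; exists n, (two_level_game mn t n), pi.
  by split; [|split; [apply: game_inV|]].
have zero_range : (0 : R) <= 0 <= h by rewrite lexx h_ge0.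
have E_one := E_game 0 1%N 1%g zero_range isT.
have E_nonempty : nonempty E := ex_intro _ _ E_one.
apply/le_anti/andP; split; last exact: lb_le_inf E_nonempty E_lb.
apply: le_div_of_forall_lt => // [|| t /andP[t_ge0 t_lt]]; first lra.
  apply/andP; split.
    by apply: le_trans (lb_le_inf E_nonempty E_lb); apply: divr_ge0; lra.
  (* needed when h = 0, where no two-player game is available *)
  apply: le_trans (inf_le _ E_one) _; apply: single_player_ratio_le1.
  exact: OPT_gt0 mn_gt0 _ (game_inV _ _ zero_range).
have t_range : 0 <= t <= h by rewrite t_ge0 ltW.
apply: le_trans (inf_le _ (E_game t 2%N 1%g t_range isT)) _.
exact: two_player_ratio_le.
Qed.
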